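(* Let $N\ge1$, $K\ge2$ be integers and let $\alpha$ be a real number with $\alpha<\frac{2}{K}$. Then in $\mathcal{B}_\alpha(N,K)$ no pure strategy is weakly dominated by another pure strategy.
   Context: Fix integers $N\ge1$, $K\ge2$ and a real number $\alpha$. The Colonel Blotto game $\mathcal{B}_\alpha(N,K)$ is the two-player simultaneous-move game with players $A,B$, each with pure strategy set $S=\{s\in\{0,1,\ldots,N\}^K:\sum_{k=1}^K s_k=N\}$, in which the payoff of player $i$ at the pure profile $(s^i,s^{-i})$ is $\pi^i(s^i,s^{-i})=\sum_{k=1}^K\big(\mathbf 1[s^i_k>s^{-i}_k]+\tfrac{\alpha}{2}\mathbf 1[s^i_k=s^{-i}_k]\big)$. A pure strategy $s\in S$ is weakly dominated by a pure strategy $\hat s\in S$ if $\pi^i(s,t)\le\pi^i(\hat s,t)$ for all $t\in S$ and $\pi^i(s,t)<\pi^i(\hat s,t)$ for at least one $t\in S$. *)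

From mathcomp Require Import all_boot all_order all_algebra.
Set Implicit Arguments. Unset Strict Implicit. Unset Printing Implicit Defensive.
Import Order.TTheory GRing.Theory Num.Theory.
Local Open Scope ring_scope.

(* Colonel Blotto game B_alpha(N,K).
   A pure strategy is an allocation s : {ffun 'I_K -> 'I_N.+1} (entries in
   {0,...,N}) with total sum N. *)
Definition blotto_strategy (N K : nat) (s : {ffun 'I_K -> 'I_N.+1}) : bool :=
  (\sum_(k < K) (s k : nat) == N)%N.

Definition blotto_payoff (R : numDomainType) (N K : nat) (alpha : R)
    (s t : {ffun 'I_K -> 'I_N.+1}) : R :=
  \sum_(k < K) (((t k < s k)%N)%:R + alpha / 2%:R * ((s k == t k : bool))%:R).

Definition weakly_dominated (R : numDomainType) (N K : nat) (alpha : R)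
    (s shat : {ffun 'I_K -> 'I_N.+1}) : Prop :=
  (forall t, blotto_strategy t -> blotto_payoff alpha s t <= blotto_payoff alpha shat t)
  /\ (exists t, blotto_strategy t /\ blotto_payoff alpha s t < blotto_payoff alpha shat t).

(* If s differs from shat, then s beats shat on some battlefield, because both allocate the
   same total N.  Hence against the opponent shat, s earns at least
   1 + (alpha/2) * (number of ties), while shat earns (alpha/2) K against itself; the gap is
   at least 1 - (alpha/2) * (number of non-ties), which is positive as soon as alpha K < 2.
   So the opponent shat itself witnesses that shat does not weakly dominate s. *)
From mathcomp Require Import all_boot all_order all_algebra.
From mathcomp Require Import reals.
From mathcomp Require Import lra.
Set Implicit Arguments. Unset Strict Implicit. Unset Printing Implicit Defensive.
Import Order.TTheory GRing.Theory Num.Theory.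
Local Open Scope ring_scope.

Lemma exists_gt_of_sum_eq (I : finType) (f g : I -> nat) :
  (\sum_i f i = \sum_i g i)%N -> (exists i, f i != g i) -> exists i, (g i < f i)%N.
Proof.
move=> sum_fg [i0 neq_fg0].
case: (boolP [exists i, g i < f i]%N) => [/existsP // | /existsPn le_fg].
have le_sum := @leqif_sum I predT (fun i => f i == g i) f g.
have /le_sum [_] : forall i, true -> (f i <= g i ?= iff (f i == g i))%N.
  by move=> i _; apply/leqif_eq; rewrite leqNgt le_fg.
by rewrite sum_fg eqxx => /esym/forall_inP/(_ i0 isT); rewrite (negbTE neq_fg0).
Qed.

Lemma blotto_strategy_exists_gt (N K : nat) (s t : {ffun 'I_K -> 'I_N.+1}) :
  blotto_strategy s -> blotto_strategy t -> s != t -> exists k, (t k < s k)%N.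
Proof.
move=> /eqP sum_s /eqP sum_t neq_st.
apply: exists_gt_of_sum_eq; first by rewrite sum_s sum_t.
apply/existsP; move: neq_st; apply: contraR => /existsPn eq_st.
by apply/eqP/ffunP => k; apply/val_inj/eqP; move: (eq_st k); rewrite negbK.
Qed.

Lemma sum_nat_of_bool (I : finType) (P : pred I) :
  (\sum_i (P i : nat) = #|P|)%N.
Proof.
rewrite -sum1_card [RHS]big_mkcond.
by apply: eq_bigr => i _; rewrite unfold_in; case: (P i).
Qed.

Lemma blotto_payoffE (R : numDomainType) (N K : nat) (alpha : R)
    (s t : {ffun 'I_K -> 'I_N.+1}) :
  blotto_payoff alpha s t =
    #|[pred k | t k < s k]%N|%:R + alpha / 2%:R * #|[pred k | s k == t k]|%:R.
Proof.
by rewrite /blotto_payoff big_split /= -mulr_sumr -!natr_sum !sum_nat_of_bool.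
Qed.

Lemma blotto_payoff_self (R : numDomainType) (N K : nat) (alpha : R)
    (t : {ffun 'I_K -> 'I_N.+1}) :
  blotto_payoff alpha t t = alpha / 2%:R * K%:R.
Proof.
rewrite blotto_payoffE (eq_card0 (fun k => ltnn (t k))) add0r.
by rewrite (eq_card (fun k => eqxx (t k))) card_ord.
Qed.

Lemma blotto_payoff_self_lt (R : realFieldType) (N K : nat) (alpha : R)
    (s t : {ffun 'I_K -> 'I_N.+1}) :
  alpha * K%:R < 2%:R -> blotto_strategy s -> blotto_strategy t -> s != t ->
  blotto_payoff alpha t t < blotto_payoff alpha s t.
Proof.
move=> small_alpha ss st neq_st.
have [k0 win_k0] := blotto_strategy_exists_gt ss st neq_st.
rewrite blotto_payoff_self blotto_payoffE.
set wins := #|_|; set ties := #|_|.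
have wins_ge1 : 1 <= wins%:R :> R by rewrite ler1n; apply/card_gt0P; exists k0.
have ties_leK : ties%:R <= K%:R :> R by rewrite ler_nat -[X in (_ <= X)%N](card_ord K) max_card.
have ties_ge0 : 0 <= ties%:R :> R by [].
have [alpha_ge0 | alpha_lt0] := lerP 0 alpha; last by nra.
have : alpha * (K%:R - ties%:R) <= alpha * K%:R by rewrite ler_wpM2l // lerBlDr lerDl.
nra.
Qed.

Theorem proposition4 (R : realType) (N K : nat) (alpha : R) :
  (1 <= N)%N -> (2 <= K)%N -> alpha < 2%:R / K%:R ->
  forall s shat : {ffun 'I_K -> 'I_N.+1},
    blotto_strategy s -> blotto_strategy shat ->
    ~ weakly_dominated alpha s shat.
Proof.
move=> _ K_ge2 alpha_lt s shat ss sshat [dominated [t [_ strict]]].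
have [eq_s | neq_s] := eqVneq s shat; first by move: strict; rewrite eq_s ltxx.
have small_alpha : alpha * K%:R < 2%:R.
  by rewrite -ltr_pdivlMr // ltr0n (ltn_trans _ K_ge2).
have := blotto_payoff_self_lt small_alpha ss sshat neq_s.
by rewrite ltNge dominated.
Qed.
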